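(* Let $G$ be a finite simple graph with at least $3$ vertices, and let $v_1,v_2\in V(G)$ be two leaves of $G$. Then $M_2(G)=M_2(G_{(v_1,v_2)})$.
   Context: A leaf is a vertex with exactly one neighbor. If $v_1,v_2$ are leaves with incident edges $\{w_1,v_1\}$ and $\{w_2,v_2\}$, then $G_{(v_1,v_2)}$ is the graph obtained by identifying $v_1$ and $v_2$ into a single vertex $v_1v_2$: its vertex set is $V(G)\setminus\{v_1,v_2\}\cup\{v_1v_2\}$ and its edge set is $E(G)\setminus\{\{w_1,v_1\},\{w_2,v_2\}\}\cup\{\{w_1,v_1v_2\},\{w_2,v_1v_2\}\}$; edges of $G$ and $G_{(v_1,v_2)}$ are identified in the obvious way. A $2$-matching is a set of edges in which every vertex has degree at most $2$; $M_2(G)$ is the simplicial complex whose vertices are edges of $G$ and whose faces are $2$-matchings of $G$. *)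

From mathcomp Require Import all_boot.
Set Implicit Arguments. Unset Strict Implicit. Unset Printing Implicit Defensive.

(* A finite (multi)graph with vertex labels in V and edge labels in E:
   a vertex set, an edge set, and for every edge its set of endpoints
   (a singleton set encodes a loop). *)
Record mgraph (V E : finType) := MGraph {
  mverts : {set V};
  medges : {set E};
  mends  : E -> {set V}
}.

Definition mdeg (V E : finType) (G : mgraph V E) (F : {set E}) (x : V) : nat :=
  \sum_(e in F | x \in mends G e) (if #|mends G e| == 1 then 2 else 1).

Definition two_matching (V E : finType) (G : mgraph V E) (F : {set E}) : bool :=
  (F \subset medges G) && [forall x in mverts G, mdeg G F x <= 2].

(* M_2(G): the simplicial complex (given by its set of faces) on the edges of
   G whose faces are the 2-matchings *)
Definition M2 (V E : finType) (G : mgraph V E) : {set {set E}} :=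
  [set F | two_matching G F].

Definition sedges (T : finType) (adj : rel T) : {set {set T}} :=
  [set e : {set T} | [exists x, exists y, adj x y && (e == [set x; y])]].

Definition sgraph (T : finType) (adj : rel T) : mgraph T {set T} :=
  MGraph setT (sedges adj) id.

Definition is_leaf (T : finType) (adj : rel T) (v : T) : bool :=
  #|[set u | adj v u]| == 1.

(* G_(v1,v2): identify v1 and v2 into one vertex, represented by v1
   (v2 is removed); edges keep their labels (the "obvious" identification),
   the endpoints of an edge are mapped through the identification. *)
Definition merge (T : finType) (v1 v2 : T) (x : T) : T :=
  if x == v2 then v1 else x.

Definition identify_leaves (T : finType) (adj : rel T) (v1 v2 : T)
  : mgraph T {set T} :=
  MGraph (setT :\ v2) (sedges adj) (fun e => merge v1 v2 @: e).

From Pilot Require Import Defs.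
From mathcomp Require Import all_boot.
Set Implicit Arguments. Unset Strict Implicit. Unset Printing Implicit Defensive.

(* A leaf lies on at most one edge of any edge set, so in G it has degree at
   most 1 in every set of edges.  In G_(v1,v2) the merged vertex only sees the
   edges through v1 or v2, each counted at most as often as in G (the edge
   v1v2, if present, becomes a loop of weight 2 = 1 + 1); hence its degree is
   at most 1 + 1.  All other vertices have the same degree in both graphs.
   So the 2-matching condition is the same in both. *)

Section LeafIdentification.

Variables (T : finType) (adj : rel T).
Hypotheses (adj_sym : symmetric adj) (adj_irr : irreflexive adj).

Lemma sedgesP e :
  reflect (exists x y, adj x y /\ e = [set x; y]) (e \in sedges adj).
Proof.
rewrite inE; apply: (iffP existsP) => [[x /existsP [y /andP [a /eqP ->]]]|[x [y [a ->]]]].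
  by exists x, y.
by exists x; apply/existsP; exists y; rewrite a eqxx.
Qed.

Lemma card_sedge e : e \in sedges adj -> #|e| = 2.
Proof.
move=> /sedgesP [x [y [a ->]]]; rewrite cards2.
by case: eqP a => [->|//]; rewrite adj_irr.
Qed.

Lemma mdeg_sgraph (F : {set {set T}}) x :
  F \subset sedges adj -> mdeg (sgraph adj) F x = \sum_(e in F) (x \in e).
Proof.
move=> sF; rewrite /mdeg /= big_mkcondr; apply: eq_bigr => e eF.
by rewrite (card_sedge (subsetP sF e eF)); case: (x \in e).
Qed.

Lemma leaf_sedge v u e :
  [set w | adj v w] = [set u] -> e \in sedges adj -> v \in e -> e = [set v; u].
Proof.
move=> Nv /sedgesP [x [y [a ->]]].
have nbr_u w : adj v w -> w = u by move=> avw; apply/set1P; rewrite -Nv inE.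
rewrite !inE => /orP [] /eqP vx; subst v; first by rewrite (nbr_u y a).
by rewrite setUC (nbr_u x) // adj_sym.
Qed.

Lemma mdeg_sgraph_leaf (F : {set {set T}}) v :
  is_leaf adj v -> F \subset sedges adj -> mdeg (sgraph adj) F v <= 1.
Proof.
move=> /cards1P [u Nv] sF; rewrite mdeg_sgraph // -big_mkcondr sum1_card.
rewrite -(cards1 [set v; u]) subset_leq_card //; apply/subsetP => e /andP [eF ve].
by rewrite inE (leaf_sedge Nv (subsetP sF e eF) ve).
Qed.

Variables (v1 v2 : T).

(* Unqualified [merge] would be the merge of sorted sequences from path.v. *)

Lemma mem_merge_imset_v1 (e : {set T}) :
  (v1 \in Defs.merge v1 v2 @: e) = (v1 \in e) || (v2 \in e).
Proof.
apply/imsetP/orP => [[y ye]|[ve|ve]]; last 2 first.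
- by exists v1; rewrite // /Defs.merge if_same.
- by exists v2; rewrite // /Defs.merge eqxx.
rewrite /Defs.merge; case: eqVneq => [yv2 _ | _ ->]; [by right; rewrite -yv2 | by left].
Qed.

Lemma mem_merge_imset_other (e : {set T}) x :
  x != v1 -> x != v2 -> (x \in Defs.merge v1 v2 @: e) = (x \in e).
Proof.
move=> xv1 xv2; apply/imsetP/idP => [[y ye]|xe]; last first.
  by exists x; rewrite // /Defs.merge (negbTE xv2).
by rewrite /Defs.merge; case: eqVneq => _ xy; [rewrite xy eqxx in xv1 | rewrite xy].
Qed.

Lemma merge_sedge_loop e :
  e \in sedges adj -> #|Defs.merge v1 v2 @: e| = 1 -> e = [set v1; v2].
Proof.
move=> /sedgesP [x [y [a ->]]].
have xy : x != y by apply: contraTneq a => ->; rewrite adj_irr.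
rewrite imsetU1 imset_set1 cards2 /Defs.merge => /eqP.
case: (eqVneq x v2) xy => [-> | xv2]; case: (eqVneq y v2) => [-> | yv2] xy //=.
all: rewrite eqSS eqb0 negbK.
- by move=> /eqP ->; rewrite setUC.
- by move=> /eqP ->.
- by rewrite (negbTE xy).
Qed.

Lemma mdeg_identify_other (F : {set {set T}}) x :
  F \subset sedges adj -> x != v1 -> x != v2 ->
  mdeg (identify_leaves adj v1 v2) F x = mdeg (sgraph adj) F x.
Proof.
move=> sF xv1 xv2; rewrite /mdeg /=.
apply: eq_big => e; first by rewrite mem_merge_imset_other.
move=> /andP [eF xe]; rewrite (card_sedge (subsetP sF e eF)) /=.
case: eqP => // /(merge_sedge_loop (subsetP sF e eF)) loop_e.
by move: xe; rewrite mem_merge_imset_other // loop_e !inE (negbTE xv1) (negbTE xv2).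
Qed.

Lemma mdeg_identify_merged (F : {set {set T}}) :
  F \subset sedges adj ->
  mdeg (identify_leaves adj v1 v2) F v1
    <= mdeg (sgraph adj) F v1 + mdeg (sgraph adj) F v2.
Proof.
move=> sF; rewrite !mdeg_sgraph // -big_split /= /mdeg /= big_mkcondr.
apply: leq_sum => e eF; rewrite mem_merge_imset_v1.
case: eqP => [/(merge_sedge_loop (subsetP sF e eF)) -> | _].
  by rewrite !inE !eqxx orbT.
by case: (v1 \in e); case: (v2 \in e).
Qed.

End LeafIdentification.

Theorem mainTheorem12 (T : finType) (adj : rel T)
  (adj_sym : symmetric adj) (adj_irr : irreflexive adj)
  (hT : 3 <= #|T|) (v1 v2 : T) (hv : v1 != v2)
  (l1 : is_leaf adj v1) (l2 : is_leaf adj v2) :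
  M2 (sgraph adj) = M2 (identify_leaves adj v1 v2).
Proof.
apply/setP => F; rewrite !inE /two_matching /=.
case sF: (F \subset sedges adj) => //=.
have leaf_deg v : is_leaf adj v -> mdeg (sgraph adj) F v <= 1.
  by move/mdeg_sgraph_leaf; apply.
apply/forallP/forallP => deg2 x; apply/implyP => xV.
- have [-> | xv1] := eqVneq x v1.
    apply: leq_trans (mdeg_identify_merged adj_irr v1 v2 sF) _.
    by rewrite -[2]/(1 + 1) leq_add ?leaf_deg.
  have xv2 : x != v2 by move: xV; rewrite !inE andbT.
  by rewrite mdeg_identify_other // (implyP (deg2 x)) // inE.
- have [-> | xv1] := eqVneq x v1; first exact: leq_trans (leaf_deg _ l1) _.
  have [-> | xv2] := eqVneq x v2; first exact: leq_trans (leaf_deg _ l2) _.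
  by rewrite -(mdeg_identify_other adj_irr sF xv1 xv2) (implyP (deg2 x)) // !inE xv2.
Qed.
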